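(* The assignments $\mathcal{C}\mapsto\mathcal{C}_q$, $F\mapsto F_q$, $\alpha\mapsto\alpha_q$ are well defined (each $F_q$ is a strict monoidal functor and each $\alpha_q$ a monoidal natural transformation) and define a 2-functor $q:\mathsf{MonCat}\to\mathsf{nonstrMonCat}$.
   Context: 2-categories and 2-functors are $\mathbf{Cat}$-enriched categories and functors. $\mathsf{MonCat}$: monoidal categories, strong monoidal functors, monoidal natural transformations; $\mathsf{nonstrMonCat}$: non-strict monoidal categories (those whose constraints are not all identities), strict monoidal functors, monoidal natural transformations. Non-strictification $\mathcal{C}_q$ of $(\mathcal{C},\otimes,\mathbf{1},a,\ell,r)$: with $\mathrm{Mag}(\bullet)$ the free unital magma on one generator and $|t|$ the number of bullets, objects are pairs $(S,t)$, $S$ a finite sequence of objects of $\mathcal{C}$, $|t|=$ length of $S$; $\mathrm{Par}(\emptyset,\emptyset)=\mathbf{1}$, $\mathrm{Par}((X),\bullet)=X$, for $|t|>1$, $t=t_1t_2$ uniquely with $|t_k|\ge1$, $S=S_1*S_2$ with $S_k$ of length $|t_k|$, $\mathrm{Par}(S,t)=\mathrm{Par}(S_1,t_1)\otimes\mathrm{Par}(S_2,t_2)$; $\mathrm{Hom}_{\mathcal{C}_q}((S,t),(S',t'))=\mathrm{Hom}_{\mathcal{C}}(\mathrm{Par}(S,t),\mathrm{Par}(S',t'))$; monoidal product $(S,t)*(S',t')=(S*S',tt')$, strict unit $(\emptyset,\emptyset)$, $f*g:=f\otimes g$, identity unit constraints, associator $a_q$ with $\mathrm{Par}(a_q)=a_{\mathrm{Par}(S,t),\mathrm{Par}(S',t'),\mathrm{Par}(S'',t'')}$.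 For strong monoidal $(F,\gamma,u):(\mathcal{C},\otimes,\mathbf{1})\to(\mathcal{D},\boxtimes,\mathbb{1})$: $F_q((X_1,\dots,X_n),t)=((FX_1,\dots,FX_n),t)$, $F_q(\emptyset,\emptyset)=(\emptyset,\emptyset)$; isomorphisms $\beta_{(S,t)}:\mathrm{Par}(F_q(S,t))\to F(\mathrm{Par}(S,t))$ are defined by $\beta_{(\emptyset,\emptyset)}=u$, $\beta_{((X),\bullet)}=\mathrm{Id}_{FX}$, and for $(S,t)=(S_1,t_1)*(S_2,t_2)$ with nonempty factors, $\beta_{(S,t)}=\gamma_{\mathrm{Par}(S_1,t_1),\mathrm{Par}(S_2,t_2)}\circ(\beta_{(S_1,t_1)}\boxtimes\beta_{(S_2,t_2)})$; for $f:(S,t)\to(S',t')$, $\mathrm{Par}(F_q f)=\beta_{(S',t')}^{-1}\circ F(\mathrm{Par}f)\circ\beta_{(S,t)}$. For monoidal $\alpha:F\Rightarrow G$, $\mathrm{Par}((\alpha_q)_{(S,t)})=\alpha_{X_1}\boxtimes\cdots\boxtimes\alpha_{X_n}$ parenthesised according to $t$, where $S=(X_1,\dots,X_n)$. *)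

Record Cat : Type := MkCat {
  ob :> Type;
  hom : ob -> ob -> Type;
  idm : forall a, hom a a;
  comp : forall a b c, hom b c -> hom a b -> hom a c }.

Arguments idm {_} _.
Arguments comp {_ _ _ _} _ _.

Definition is_cat (C : Cat) : Prop :=
  (forall a b (f : hom C a b), comp (idm b) f = f) /\
  (forall a b (f : hom C a b), comp f (idm a) = f) /\
  (forall a b c d (f : hom C a b) (g : hom C b c) (h : hom C c d),
      comp h (comp g f) = comp (comp h g) f).

Definition eq_hom {C : Cat} {a b : C} (e : a = b) : hom C a b :=
  match e in _ = y return hom C a y with eq_refl => idm a end.

Definition is_identity {C : Cat} {a b : C} (f : hom C a b) : Prop :=
  exists e : a = b, f = eq_hom e.

Definition inverse_pair {C : Cat} {a b : C} (f : hom C a b) (g : hom C b a) : Prop :=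
  comp g f = idm a /\ comp f g = idm b.

Record MonData : Type := MkMon {
  mcat :> Cat;
  tens : mcat -> mcat -> mcat;
  tensm : forall a b c d, hom mcat a b -> hom mcat c d ->
          hom mcat (tens a c) (tens b d);
  munit : mcat;
  massoc : forall x y z, hom mcat (tens (tens x y) z) (tens x (tens y z));
  massoc_inv : forall x y z, hom mcat (tens x (tens y z)) (tens (tens x y) z);
  mlunit : forall x, hom mcat (tens munit x) x;
  mlunit_inv : forall x, hom mcat x (tens munit x);
  mrunit : forall x, hom mcat (tens x munit) x;
  mrunit_inv : forall x, hom mcat x (tens x munit) }.

Arguments tens {m} _ _.
Arguments tensm {m a b c d} _ _.
Arguments massoc {m} x y z.
Arguments massoc_inv {m} x y z.
Arguments mlunit {m} x.
Arguments mlunit_inv {m} x.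
Arguments mrunit {m} x.
Arguments mrunit_inv {m} x.

Definition is_moncat (M : MonData) : Prop :=
  is_cat M /\
  (forall a b : M, tensm (idm a) (idm b) = idm (tens a b)) /\
  (forall a b c a' b' c' (f : hom M a b) (g : hom M b c)
          (f' : hom M a' b') (g' : hom M b' c'),
      tensm (comp g f) (comp g' f') = comp (tensm g g') (tensm f f')) /\
  (forall a a' a'' b b' b'' (f : hom M a b) (f' : hom M a' b') (f'' : hom M a'' b''),
      comp (massoc b b' b'') (tensm (tensm f f') f'')
      = comp (tensm f (tensm f' f'')) (massoc a a' a'')) /\
  (forall x y z : M, inverse_pair (massoc x y z) (massoc_inv x y z)) /\
  (forall a b (f : hom M a b),
      comp (mlunit b) (tensm (idm (munit M)) f) = comp f (mlunit a)) /\
  (forall x : M, inverse_pair (mlunit x) (mlunit_inv x)) /\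
  (forall a b (f : hom M a b),
      comp (mrunit b) (tensm f (idm (munit M))) = comp f (mrunit a)) /\
  (forall x : M, inverse_pair (mrunit x) (mrunit_inv x)) /\
  (forall w x y z : M,
      comp (massoc w x (tens y z)) (massoc (tens w x) y z)
      = comp (tensm (idm w) (massoc x y z))
             (comp (massoc w (tens x y) z) (tensm (massoc w x y) (idm z)))) /\
  (forall x y : M,
      comp (tensm (idm x) (mlunit y)) (massoc x (munit M) y)
      = tensm (mrunit x) (idm y)).

Definition is_strict_moncat (M : MonData) : Prop :=
  (forall x y z : M, is_identity (massoc x y z)) /\
  (forall x : M, is_identity (mlunit x)) /\
  (forall x : M, is_identity (mrunit x)).

Definition is_nonstrict (M : MonData) : Prop := ~ is_strict_moncat M.

Record MonFun (C D : MonData) : Type := MkMonFun {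
  fob : C -> D;
  fmap : forall a b, hom C a b -> hom D (fob a) (fob b);
  fgam : forall x y, hom D (tens (fob x) (fob y)) (fob (tens x y));
  fgam_inv : forall x y, hom D (fob (tens x y)) (tens (fob x) (fob y));
  funit : hom D (munit D) (fob (munit C));
  funit_inv : hom D (fob (munit C)) (munit D) }.

Arguments MkMonFun {C D} _ _ _ _ _ _.
Arguments fob {C D} _ _.
Arguments fmap {C D} _ {a b} _.
Arguments fgam {C D} _ x y.
Arguments fgam_inv {C D} _ x y.
Arguments funit {C D} _.
Arguments funit_inv {C D} _.

Definition is_strong {C D : MonData} (F : MonFun C D) : Prop :=
  (forall a : C, fmap F (idm a) = idm (fob F a)) /\
  (forall a b c (f : hom C a b) (g : hom C b c),
      fmap F (comp g f) = comp (fmap F g) (fmap F f)) /\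
  (forall a a' b b' (f : hom C a b) (f' : hom C a' b'),
      comp (fgam F b b') (tensm (fmap F f) (fmap F f'))
      = comp (fmap F (tensm f f')) (fgam F a a')) /\
  (forall x y : C, inverse_pair (fgam F x y) (fgam_inv F x y)) /\
  inverse_pair (funit F) (funit_inv F) /\
  (forall x y z : C,
      comp (fmap F (massoc x y z))
           (comp (fgam F (tens x y) z) (tensm (fgam F x y) (idm (fob F z))))
      = comp (fgam F x (tens y z))
             (comp (tensm (idm (fob F x)) (fgam F y z))
                   (massoc (fob F x) (fob F y) (fob F z)))) /\
  (forall x : C,
      comp (fmap F (mlunit x))
           (comp (fgam F (munit C) x) (tensm (funit F) (idm (fob F x))))
      = mlunit (fob F x)) /\
  (forall x : C,
      comp (fmap F (mrunit x))
           (comp (fgam F x (munit C)) (tensm (idm (fob F x)) (funit F)))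
      = mrunit (fob F x)).

Definition is_strict {C D : MonData} (F : MonFun C D) : Prop :=
  is_strong F /\ (forall x y : C, is_identity (fgam F x y)) /\ is_identity (funit F).

Definition idMF (C : MonData) : MonFun C C :=
  MkMonFun (fun x => x) (fun a b f => f)
    (fun x y => idm (tens x y)) (fun x y => idm (tens x y))
    (idm (munit C)) (idm (munit C)).

Definition compMF {C D E : MonData} (G : MonFun D E) (F : MonFun C D) : MonFun C E :=
  MkMonFun (fun x => fob G (fob F x)) (fun a b f => fmap G (fmap F f))
    (fun x y => comp (fmap G (fgam F x y)) (fgam G (fob F x) (fob F y)))
    (fun x y => comp (fgam_inv G (fob F x) (fob F y)) (fmap G (fgam_inv F x y)))
    (comp (fmap G (funit F)) (funit G))
    (comp (funit_inv G) (fmap G (funit_inv F))).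

Definition NatData {C D : MonData} (F G : MonFun C D) : Type :=
  forall x : C, hom D (fob F x) (fob G x).

Definition is_monnat {C D : MonData} {F G : MonFun C D} (a : NatData F G) : Prop :=
  (forall x y (f : hom C x y), comp (a y) (fmap F f) = comp (fmap G f) (a x)) /\
  (forall x y : C, comp (a (tens x y)) (fgam F x y) = comp (fgam G x y) (tensm (a x) (a y))) /\
  comp (a (munit C)) (funit F) = funit G.

Definition idN {C D : MonData} (F : MonFun C D) : NatData F F :=
  fun x => idm (fob F x).

Definition vcomp {C D : MonData} {F G H : MonFun C D}
  (b : NatData G H) (a : NatData F G) : NatData F H :=
  fun x => comp (b x) (a x).

Definition hcomp {C D E : MonData} {F F' : MonFun C D} {G G' : MonFun D E}
  (b : NatData G G') (a : NatData F F') : NatData (compMF G F) (compMF G' F') :=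
  fun x => comp (b (fob F' x)) (fmap G (a x)).

Definition castN {C D : MonData} {F G F' G' : MonFun C D}
  (e1 : F = F') (e2 : G = G') (a : NatData F G) : NatData F' G' :=
  match e1 in _ = F1 return NatData F1 G' with
  | eq_refl => match e2 in _ = G1 return NatData F G1 with eq_refl => a end
  end.

(* An object (S,t) with t in the free unital magma Mag(bullet) and S a
   sequence of length |t| is encoded as: None for (empty, empty), and
   Some T for nonempty t, where T is the binary tree t whose bullets are
   labelled, left to right, by the entries of S. *)
Inductive ntree (A : Type) : Type :=
| Leaf (x : A)
| Node (l r : ntree A).
Arguments Leaf {A} x.
Arguments Node {A} l r.

Fixpoint ntree_map {A B : Type} (f : A -> B) (t : ntree A) : ntree B :=
  match t with
  | Leaf x => Leaf (f x)
  | Node l r => Node (ntree_map f l) (ntree_map f r)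
  end.

Definition qob (C : MonData) : Type := option (ntree C).

Fixpoint parN (C : MonData) (t : ntree C) : C :=
  match t with
  | Leaf x => x
  | Node l r => tens (parN C l) (parN C r)
  end.

Definition Par (C : MonData) (o : qob C) : C :=
  match o with None => munit C | Some t => parN C t end.

(* (S,t) * (S',t') = (S*S', t t')  (unital magma product) *)
Definition qtens {A : Type} (o o' : option (ntree A)) : option (ntree A) :=
  match o with
  | None => o'
  | Some a => match o' with None => Some a | Some b => Some (Node a b) end
  end.

Definition qphi (C : MonData) (o o' : qob C) :
  hom C (tens (Par C o) (Par C o')) (Par C (qtens o o')) :=
  match o as o0 return hom C (tens (Par C o0) (Par C o')) (Par C (qtens o0 o')) with
  | None => mlunit (Par C o')
  | Some a =>
      match o' as o1 return hom C (tens (parN C a) (Par C o1)) (Par C (qtens (Some a) o1)) with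
      | None => mrunit (parN C a)
      | Some b => idm (tens (parN C a) (parN C b))
      end
  end.

Definition qphi_inv (C : MonData) (o o' : qob C) :
  hom C (Par C (qtens o o')) (tens (Par C o) (Par C o')) :=
  match o as o0 return hom C (Par C (qtens o0 o')) (tens (Par C o0) (Par C o')) with
  | None => mlunit_inv (Par C o')
  | Some a =>
      match o' as o1 return hom C (Par C (qtens (Some a) o1)) (tens (parN C a) (Par C o1)) with
      | None => mrunit_inv (parN C a)
      | Some b => idm (tens (parN C a) (parN C b))
      end
  end.

Definition qcat (C : MonData) : Cat :=
  MkCat (qob C) (fun o o' => hom C (Par C o) (Par C o'))
        (fun o => idm (Par C o)) (fun a b c g f => comp g f).

(* f * g := f (x) g  (conjugated by the canonical isos above, which are
   identities when all four objects are nonempty) *)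
Definition qtensm (C : MonData) (o1 o2 o3 o4 : qob C)
  (f : hom C (Par C o1) (Par C o2)) (g : hom C (Par C o3) (Par C o4)) :
  hom C (Par C (qtens o1 o3)) (Par C (qtens o2 o4)) :=
  comp (qphi C o2 o4) (comp (tensm f g) (qphi_inv C o1 o3)).

Definition qassoc (C : MonData) (o o' o'' : qob C) :
  hom C (Par C (qtens (qtens o o') o'')) (Par C (qtens o (qtens o' o''))) :=
  match o as x return hom C (Par C (qtens (qtens x o') o'')) (Par C (qtens x (qtens o' o''))) with
  | None => idm _
  | Some a =>
    match o' as y return hom C (Par C (qtens (qtens (Some a) y) o''))
                               (Par C (qtens (Some a) (qtens y o''))) with
    | None => idm _
    | Some b =>
      match o'' as z return hom C (Par C (qtens (Some (Node a b)) z))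
                                  (Par C (qtens (Some a) (qtens (Some b) z))) with
      | None => idm _
      | Some c => massoc (parN C a) (parN C b) (parN C c)
      end
    end
  end.

Definition qassoc_inv (C : MonData) (o o' o'' : qob C) :
  hom C (Par C (qtens o (qtens o' o''))) (Par C (qtens (qtens o o') o'')) :=
  match o as x return hom C (Par C (qtens x (qtens o' o''))) (Par C (qtens (qtens x o') o'')) with
  | None => idm _
  | Some a =>
    match o' as y return hom C (Par C (qtens (Some a) (qtens y o'')))
                               (Par C (qtens (qtens (Some a) y) o'')) with
    | None => idm _
    | Some b =>
      match o'' as z return hom C (Par C (qtens (Some a) (qtens (Some b) z)))
                                  (Par C (qtens (Some (Node a b)) z)) with
      | None => idm _
      | Some c => massoc_inv (parN C a) (parN C b) (parN C c)
      end
    end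
  end.

Definition qrunit (C : MonData) (o : qob C) : hom C (Par C (qtens o None)) (Par C o) :=
  match o as x return hom C (Par C (qtens x None)) (Par C x) with
  | None => idm _ | Some a => idm _ end.
Definition qrunit_inv (C : MonData) (o : qob C) : hom C (Par C o) (Par C (qtens o None)) :=
  match o as x return hom C (Par C x) (Par C (qtens x None)) with
  | None => idm _ | Some a => idm _ end.

Definition qmon (C : MonData) : MonData :=
  MkMon (qcat C) qtens (qtensm C) None
        (qassoc C) (qassoc_inv C)
        (fun o => idm (Par C o)) (fun o => idm (Par C o))
        (qrunit C) (qrunit_inv C).

Definition qfob {C D : MonData} (F : MonFun C D) (o : qob C) : qob D :=
  option_map (ntree_map (fob F)) o.

Fixpoint betaN {C D : MonData} (F : MonFun C D) (t : ntree C) :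
  hom D (parN D (ntree_map (fob F) t)) (fob F (parN C t)) :=
  match t as t0 return hom D (parN D (ntree_map (fob F) t0)) (fob F (parN C t0)) with
  | Leaf x => idm (fob F x)
  | Node l r => comp (fgam F (parN C l) (parN C r)) (tensm (betaN F l) (betaN F r))
  end.

Fixpoint betaN_inv {C D : MonData} (F : MonFun C D) (t : ntree C) :
  hom D (fob F (parN C t)) (parN D (ntree_map (fob F) t)) :=
  match t as t0 return hom D (fob F (parN C t0)) (parN D (ntree_map (fob F) t0)) with
  | Leaf x => idm (fob F x)
  | Node l r => comp (tensm (betaN_inv F l) (betaN_inv F r)) (fgam_inv F (parN C l) (parN C r))
  end.

Definition qbeta {C D : MonData} (F : MonFun C D) (o : qob C) :
  hom D (Par D (qfob F o)) (fob F (Par C o)) :=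
  match o as x return hom D (Par D (qfob F x)) (fob F (Par C x)) with
  | None => funit F | Some t => betaN F t end.

Definition qbeta_inv {C D : MonData} (F : MonFun C D) (o : qob C) :
  hom D (fob F (Par C o)) (Par D (qfob F o)) :=
  match o as x return hom D (fob F (Par C x)) (Par D (qfob F x)) with
  | None => funit_inv F | Some t => betaN_inv F t end.

Definition qfmap {C D : MonData} (F : MonFun C D) (o o' : qob C)
  (f : hom C (Par C o) (Par C o')) : hom D (Par D (qfob F o)) (Par D (qfob F o')) :=
  comp (qbeta_inv F o') (comp (fmap F f) (qbeta F o)).

Definition qfgam {C D : MonData} (F : MonFun C D) (o o' : qob C) :
  hom D (Par D (qtens (qfob F o) (qfob F o'))) (Par D (qfob F (qtens o o'))) :=
  match o as x return hom D (Par D (qtens (qfob F x) (qfob F o'))) (Par D (qfob F (qtens x o'))) with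
  | None => idm _
  | Some a =>
    match o' as y return hom D (Par D (qtens (qfob F (Some a)) (qfob F y)))
                               (Par D (qfob F (qtens (Some a) y))) with
    | None => idm _
    | Some b => idm _
    end
  end.

Definition qfgam_inv {C D : MonData} (F : MonFun C D) (o o' : qob C) :
  hom D (Par D (qfob F (qtens o o'))) (Par D (qtens (qfob F o) (qfob F o'))) :=
  match o as x return hom D (Par D (qfob F (qtens x o'))) (Par D (qtens (qfob F x) (qfob F o'))) with
  | None => idm _
  | Some a =>
    match o' as y return hom D (Par D (qfob F (qtens (Some a) y)))
                               (Par D (qtens (qfob F (Some a)) (qfob F y))) with
    | None => idm _
    | Some b => idm _
    end
  end.

Definition qF {C D : MonData} (F : MonFun C D) : MonFun (qmon C) (qmon D) :=
  MkMonFun (C := qmon C) (D := qmon D) (qfob F) (qfmap F) (qfgam F) (qfgam_inv F)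
           (idm (munit D)) (idm (munit D)).

Fixpoint alphaN {C D : MonData} {F G : MonFun C D} (a : NatData F G) (t : ntree C) :
  hom D (parN D (ntree_map (fob F) t)) (parN D (ntree_map (fob G) t)) :=
  match t as t0 return hom D (parN D (ntree_map (fob F) t0)) (parN D (ntree_map (fob G) t0)) with
  | Leaf x => a x
  | Node l r => tensm (alphaN a l) (alphaN a r)
  end.

Definition qN {C D : MonData} {F G : MonFun C D} (a : NatData F G) : NatData (qF F) (qF G) :=
  fun o => match o as x return hom D (Par D (qfob F x)) (Par D (qfob G x)) with
           | None => idm (munit D)
           | Some t => alphaN a t
           end.

(* Objects of C_q are bracketed words o, parenthesised in C by Par; the
   tensor of C_q concatenates words and acts on morphisms through the
   canonical isomorphisms phi : Par o (x) Par o' -> Par (o * o'), which are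
   identities or unitors. *)

From Stdlib Require Import ProofIrrelevance FunctionalExtensionality.

Section CategoryFacts.
Context {C : Cat} (HC : is_cat C).

Lemma comp_idl {a b} (f : hom C a b) : comp (idm b) f = f.
Proof. apply HC. Qed.

Lemma comp_idr {a b} (f : hom C a b) : comp f (idm a) = f.
Proof. apply HC. Qed.

Lemma comp_assoc {a b c d} (f : hom C a b) (g : hom C b c) (h : hom C c d) :
  comp h (comp g f) = comp (comp h g) f.
Proof. apply HC. Qed.

Lemma cancel_l {a b c} (f : hom C a b) g (h : hom C c a) :
  inverse_pair f g -> comp g (comp f h) = h.
Proof. intros [gf _]. rewrite comp_assoc, gf. apply comp_idl. Qed.

Lemma cancel_r {a b c} (f : hom C a b) g (h : hom C c b) :
  inverse_pair f g -> comp f (comp g h) = h.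
Proof. intros [_ fg]. rewrite comp_assoc, fg. apply comp_idl. Qed.

Lemma iso_epi {a b c} (f : hom C a b) g (h k : hom C b c) :
  inverse_pair f g -> comp h f = comp k f -> h = k.
Proof.
  intros [_ fg] E.
  rewrite <- (comp_idr h), <- (comp_idr k), <- fg, !comp_assoc, E. reflexivity.
Qed.

Lemma iso_mono {a b c} (f : hom C a b) g (h k : hom C c a) :
  inverse_pair f g -> comp f h = comp f k -> h = k.
Proof.
  intros [gf _] E.
  rewrite <- (comp_idl h), <- (comp_idl k), <- gf, <- !comp_assoc, E. reflexivity.
Qed.

Lemma inverse_id (a : C) : inverse_pair (idm a) (idm a).
Proof. split; apply comp_idl. Qed.

Lemma inverse_comp {a b c} (f : hom C a b) f' (g : hom C b c) g' :
  inverse_pair f f' -> inverse_pair g g' -> inverse_pair (comp g f) (comp f' g').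
Proof.
  intros Hf Hg; split.
  - rewrite <- comp_assoc, (cancel_l g g' f Hg). apply Hf.
  - rewrite <- comp_assoc, (cancel_r f f' g' Hf). apply Hg.
Qed.

Lemma inverse_unique {a b} (f : hom C a b) g g' :
  inverse_pair f g -> inverse_pair f g' -> g = g'.
Proof.
  intros [gf _] [_ fg']. rewrite <- (comp_idr g), <- fg', comp_assoc, gf. apply comp_idl.
Qed.

Lemma eq_hom_irrel {a b : C} (e e' : a = b) : eq_hom e = eq_hom e'.
Proof. rewrite (proof_irrelevance _ e e'). reflexivity. Qed.

Lemma eq_hom_refl {a : C} (e : a = a) : eq_hom e = idm a.
Proof. rewrite (proof_irrelevance _ e eq_refl). reflexivity. Qed.

Lemma eq_hom_comp {a b c : C} (e1 : a = b) (e2 : b = c) :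
  comp (eq_hom e2) (eq_hom e1) = eq_hom (eq_trans e1 e2).
Proof. destruct e1, e2. apply comp_idl. Qed.

Lemma eq_hom_comp_k {a b c d : C} (e1 : a = b) (e2 : b = c) (k : hom C d a) :
  comp (eq_hom e2) (comp (eq_hom e1) k) = comp (eq_hom (eq_trans e1 e2)) k.
Proof. rewrite comp_assoc, eq_hom_comp. reflexivity. Qed.

Lemma eq_hom_inverse {a b : C} (e : a = b) : inverse_pair (eq_hom e) (eq_hom (eq_sym e)).
Proof. destruct e. apply inverse_id. Qed.

End CategoryFacts.

Ltac reassoc HC := repeat rewrite <- (comp_assoc HC).

Section MonoidalFacts.
Context {M : MonData} (HM : is_moncat M).

Lemma moncat_cat : is_cat M.
Proof. apply HM. Qed.

Let HC : is_cat M := moncat_cat.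

Lemma tensm_id (a b : M) : tensm (idm a) (idm b) = idm (tens a b).
Proof. apply HM. Qed.

Lemma tensm_comp {a b c a' b' c'} (f : hom M a b) (g : hom M b c)
      (f' : hom M a' b') (g' : hom M b' c') :
  tensm (comp g f) (comp g' f') = comp (tensm g g') (tensm f f').
Proof. apply HM. Qed.

Lemma assoc_nat {a a' a'' b b' b''} (f : hom M a b) (f' : hom M a' b') (f'' : hom M a'' b'') :
  comp (massoc b b' b'') (tensm (tensm f f') f'')
  = comp (tensm f (tensm f' f'')) (massoc a a' a'').
Proof. apply HM. Qed.

Lemma assoc_iso (x y z : M) : inverse_pair (massoc x y z) (massoc_inv x y z).
Proof. apply HM. Qed.

Lemma lunit_nat {a b} (f : hom M a b) :
  comp (mlunit b) (tensm (idm (munit M)) f) = comp f (mlunit a).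
Proof. apply HM. Qed.

Lemma lunit_iso (x : M) : inverse_pair (mlunit x) (mlunit_inv x).
Proof. apply HM. Qed.

Lemma runit_nat {a b} (f : hom M a b) :
  comp (mrunit b) (tensm f (idm (munit M))) = comp f (mrunit a).
Proof. apply HM. Qed.

Lemma runit_iso (x : M) : inverse_pair (mrunit x) (mrunit_inv x).
Proof. apply HM. Qed.

Lemma pentagon (w x y z : M) :
  comp (massoc w x (tens y z)) (massoc (tens w x) y z)
  = comp (tensm (idm w) (massoc x y z))
         (comp (massoc w (tens x y) z) (tensm (massoc w x y) (idm z))).
Proof. apply HM. Qed.

Lemma triangle (x y : M) :
  comp (tensm (idm x) (mlunit y)) (massoc x (munit M) y) = tensm (mrunit x) (idm y).
Proof. apply HM. Qed.

Lemma inverse_tensm {a b c d} (f : hom M a b) f' (g : hom M c d) g' :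
  inverse_pair f f' -> inverse_pair g g' -> inverse_pair (tensm f g) (tensm f' g').
Proof.
  intros [Hf1 Hf2] [Hg1 Hg2]; split; rewrite <- tensm_comp.
  - rewrite Hf1, Hg1. apply tensm_id.
  - rewrite Hf2, Hg2. apply tensm_id.
Qed.

Lemma tensm_split_lr {a b c d} (f : hom M a b) (g : hom M c d) :
  tensm f g = comp (tensm f (idm d)) (tensm (idm a) g).
Proof. rewrite <- tensm_comp, (comp_idl HC), (comp_idr HC). reflexivity. Qed.

Lemma tensm_split_rl {a b c d} (f : hom M a b) (g : hom M c d) :
  tensm f g = comp (tensm (idm b) g) (tensm f (idm c)).
Proof. rewrite <- tensm_comp, (comp_idl HC), (comp_idr HC). reflexivity. Qed.

Lemma tensm_comp_l {a b c a' b'} (f : hom M a b) (g : hom M b c) (h : hom M a' b') :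
  tensm (comp g f) h = comp (tensm g (idm b')) (tensm f h).
Proof. rewrite <- tensm_comp, (comp_idl HC). reflexivity. Qed.

Lemma tensm_comp_r {a b c a' b'} (f : hom M a b) (g : hom M b c) (h : hom M a' b') :
  tensm h (comp g f) = comp (tensm (idm b') g) (tensm h f).
Proof. rewrite <- tensm_comp, (comp_idl HC). reflexivity. Qed.

Lemma tensm_eq_hom {a b c d : M} (e1 : a = b) (e2 : c = d) :
  tensm (eq_hom e1) (eq_hom e2) = eq_hom (f_equal2 tens e1 e2).
Proof. destruct e1, e2. simpl. rewrite (eq_hom_refl (C := M)). apply tensm_id. Qed.

(* Tensoring with the unit object on either side is faithful, since it is
   isomorphic to the identity functor through the unitors. *)
Lemma unit_tensm_faithful_l {a b} (g h : hom M a b) :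
  tensm (idm (munit M)) g = tensm (idm (munit M)) h -> g = h.
Proof.
  intros E. apply (iso_epi HC (mlunit a) (mlunit_inv a) _ _ (lunit_iso a)).
  rewrite <- !lunit_nat, E. reflexivity.
Qed.

Lemma unit_tensm_faithful_r {a b} (g h : hom M a b) :
  tensm g (idm (munit M)) = tensm h (idm (munit M)) -> g = h.
Proof.
  intros E. apply (iso_epi HC (mrunit a) (mrunit_inv a) _ _ (runit_iso a)).
  rewrite <- !runit_nat, E. reflexivity.
Qed.

Lemma lunit_assoc (x y : M) :
  comp (mlunit (tens x y)) (massoc (munit M) x y) = tensm (mlunit x) (idm y).
Proof.
  apply unit_tensm_faithful_l.
  apply (iso_epi HC
    (comp (massoc (munit M) (tens (munit M) x) y) (tensm (massoc (munit M) (munit M) x) (idm y)))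
    (comp (tensm (massoc_inv (munit M) (munit M) x) (idm y)) (massoc_inv (munit M) (tens (munit M) x) y))).
  { apply (inverse_comp HC); [apply inverse_tensm; [apply assoc_iso | apply (inverse_id HC)]
                            | apply assoc_iso]. }
  rewrite tensm_comp_r, <- (comp_assoc HC), <- pentagon.
  rewrite (comp_assoc HC), triangle, <- (tensm_id x y), <- assoc_nat.
  rewrite <- (triangle (munit M) x), tensm_comp_l, (comp_assoc HC), assoc_nat, <- (comp_assoc HC).
  reflexivity.
Qed.

Lemma runit_assoc (x y : M) :
  comp (tensm (idm x) (mrunit y)) (massoc x y (munit M)) = mrunit (tens x y).
Proof.
  apply unit_tensm_faithful_r.
  apply (iso_mono HC (massoc x y (munit M)) (massoc_inv x y (munit M)) _ _ (assoc_iso _ _ _)).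
  rewrite <- (triangle (tens x y) (munit M)), <- (tensm_id x y).
  rewrite (comp_assoc HC), assoc_nat, <- (comp_assoc HC), pentagon.
  rewrite (comp_assoc HC), <- tensm_comp_r, triangle, (comp_assoc HC), <- assoc_nat,
          <- (comp_assoc HC), tensm_comp_l.
  reflexivity.
Qed.

Lemma lunit_unit_runit : mlunit (munit M) = mrunit (munit M).
Proof.
  assert (E : mlunit (tens (munit M) (munit M)) = tensm (idm (munit M)) (mlunit (munit M))).
  { apply (iso_mono HC (mlunit (munit M)) (mlunit_inv _) _ _ (lunit_iso _)).
    rewrite lunit_nat. reflexivity. }
  apply unit_tensm_faithful_r. rewrite <- triangle, <- E, lunit_assoc. reflexivity.
Qed.

Lemma lunit_inv_unit_runit_inv : mlunit_inv (munit M) = mrunit_inv (munit M).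
Proof.
  apply (inverse_unique HC (mlunit (munit M))); [apply lunit_iso|].
  rewrite lunit_unit_runit. apply runit_iso.
Qed.

End MonoidalFacts.

(* A monoidal functor whose structure maps gamma and u are invertible
   (with the given inverses); this is all that the construction of the
   comparison isomorphisms beta needs. *)
Definition structure_invertible {C D : MonData} (F : MonFun C D) : Prop :=
  (forall x y : C, inverse_pair (fgam F x y) (fgam_inv F x y)) /\
  inverse_pair (funit F) (funit_inv F).

Section StrongFunctorFacts.
Context {C D : MonData} {F : MonFun C D} (HF : is_strong F).

Lemma fmap_id (a : C) : fmap F (idm a) = idm (fob F a).
Proof. apply HF. Qed.

Lemma fmap_comp {a b c} (f : hom C a b) (g : hom C b c) :
  fmap F (comp g f) = comp (fmap F g) (fmap F f).
Proof. apply HF. Qed.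

Lemma fgam_nat {a a' b b'} (f : hom C a b) (f' : hom C a' b') :
  comp (fgam F b b') (tensm (fmap F f) (fmap F f'))
  = comp (fmap F (tensm f f')) (fgam F a a').
Proof. apply HF. Qed.

Lemma strong_structure_invertible : structure_invertible F.
Proof. split; apply HF. Qed.

Lemma fgam_assoc (x y z : C) :
  comp (fmap F (massoc x y z)) (comp (fgam F (tens x y) z) (tensm (fgam F x y) (idm (fob F z))))
  = comp (fgam F x (tens y z))
         (comp (tensm (idm (fob F x)) (fgam F y z)) (massoc (fob F x) (fob F y) (fob F z))).
Proof. apply HF. Qed.

Lemma fgam_lunit (x : C) :
  comp (fmap F (mlunit x)) (comp (fgam F (munit C) x) (tensm (funit F) (idm (fob F x))))
  = mlunit (fob F x).
Proof. apply HF. Qed.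

Lemma fgam_runit (x : C) :
  comp (fmap F (mrunit x)) (comp (fgam F x (munit C)) (tensm (idm (fob F x)) (funit F)))
  = mrunit (fob F x).
Proof. apply HF. Qed.

Lemma fmap_inverse {a b : C} (f : hom C a b) g :
  inverse_pair f g -> inverse_pair (fmap F f) (fmap F g).
Proof.
  intros [gf fg]; split; rewrite <- fmap_comp; [rewrite gf | rewrite fg]; apply fmap_id.
Qed.

End StrongFunctorFacts.

(* Its tensor of
   morphisms is [tensm] of C conjugated by the canonical isomorphisms
   phi : Par o (x) Par o' -> Par (o * o'), so functoriality and naturality
   reduce to those of C.  For the associator we use the characterisation
   a_q . Psi = Phi . a (Psi, Phi built from phi), which holds in all eight
   cases of empty/nonempty factors by the Kelly coherence lemmas; the
   pentagon and triangle then reduce to those of C case by case. *)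
Section NonStrictification.
Context {C : MonData} (HM : is_moncat C).

Let HC : is_cat C := moncat_cat HM.

Lemma qphi_iso (o o' : qob C) : inverse_pair (qphi C o o') (qphi_inv C o o').
Proof.
  destruct o as [a|]; [destruct o' as [b|]|]; simpl.
  - apply (inverse_id HC).
  - apply (runit_iso HM).
  - apply (lunit_iso HM).
Qed.

Lemma qtensm_id (o o' : qob C) :
  qtensm C o o o' o' (idm (Par C o)) (idm (Par C o')) = idm (Par C (qtens o o')).
Proof. unfold qtensm. rewrite (tensm_id HM), (comp_idl HC). apply qphi_iso. Qed.

Lemma qtensm_comp (a b c a' b' c' : qob C) f g f' g' :
  qtensm C a c a' c' (comp g f) (comp g' f')
  = comp (qtensm C b c b' c' g g') (qtensm C a b a' b' f f').
Proof.
  unfold qtensm. rewrite (tensm_comp HM). reassoc HC.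
  rewrite (cancel_l HC _ _ _ (qphi_iso b b')). reflexivity.
Qed.

Lemma qtensm_phi (a b a' b' : qob C) f g :
  comp (qtensm C a b a' b' f g) (qphi C a a') = comp (qphi C b b') (tensm f g).
Proof.
  unfold qtensm. reassoc HC. rewrite (proj1 (qphi_iso a a')), (comp_idr HC). reflexivity.
Qed.

Lemma qtensm_nonempty (a b c d : ntree C) f g :
  qtensm C (Some a) (Some b) (Some c) (Some d) f g = tensm f g.
Proof. unfold qtensm. simpl. rewrite (comp_idl HC), (comp_idr HC). reflexivity. Qed.

Lemma qtensm_unit_l (a b : qob C) g : qtensm C None None a b (idm (munit C)) g = g.
Proof.
  unfold qtensm. simpl.
  rewrite (comp_assoc HC), (lunit_nat HM), <- (comp_assoc HC), (proj2 (lunit_iso HM _)).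
  apply (comp_idr HC).
Qed.

Lemma qtensm_unit_r (a b : qob C) f :
  comp (qrunit C b) (qtensm C a b None None f (idm (munit C))) = comp f (qrunit C a).
Proof.
  unfold qtensm.
  destruct a as [a|], b as [b|]; simpl;
    rewrite ?(lunit_unit_runit HM), ?(lunit_inv_unit_runit_inv HM), !(comp_idl HC), !(comp_idr HC);
    rewrite (comp_assoc HC), (runit_nat HM), <- (comp_assoc HC), (proj2 (runit_iso HM _));
    apply (comp_idr HC).
Qed.

Lemma qtensm_unit_r_nonempty (a b : ntree C) f :
  qtensm C (Some a) (Some b) None None f (idm (munit C)) = f.
Proof.
  pose proof (qtensm_unit_r (Some a) (Some b) f) as E. simpl in E.
  rewrite (comp_idl HC), (comp_idr HC) in E. exact E.
Qed.

Definition qPsi (o o' o'' : qob C) :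
  hom C (tens (tens (Par C o) (Par C o')) (Par C o'')) (Par C (qtens (qtens o o') o'')) :=
  comp (qphi C (qtens o o') o'') (tensm (qphi C o o') (idm (Par C o''))).

Definition qPhi (o o' o'' : qob C) :
  hom C (tens (Par C o) (tens (Par C o') (Par C o''))) (Par C (qtens o (qtens o' o''))) :=
  comp (qphi C o (qtens o' o'')) (tensm (idm (Par C o)) (qphi C o' o'')).

Lemma qassoc_char (o o' o'' : qob C) :
  comp (qassoc C o o' o'') (qPsi o o' o'')
  = comp (qPhi o o' o'') (massoc (Par C o) (Par C o') (Par C o'')).
Proof.
  unfold qPsi, qPhi.
  destruct o as [a|], o' as [b|], o'' as [c|]; simpl;
    rewrite ?(comp_idl HC), ?(tensm_id HM), ?(comp_idl HC).
  - apply (comp_idr HC).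
  - rewrite (comp_idr HC). symmetry. apply (runit_assoc HM).
  - symmetry. apply (triangle HM).
  - rewrite <- (comp_assoc HC), (triangle HM). reflexivity.
  - rewrite (comp_idr HC). symmetry. apply (lunit_assoc HM).
  - rewrite (lunit_nat HM), <- (comp_assoc HC), (lunit_assoc HM). reflexivity.
  - rewrite (lunit_nat HM), <- (comp_assoc HC), (lunit_assoc HM). reflexivity.
  - rewrite (lunit_nat HM), <- (comp_assoc HC), (lunit_assoc HM). reflexivity.
Qed.

Lemma qPsi_iso (o o' o'' : qob C) :
  inverse_pair (qPsi o o' o'')
               (comp (tensm (qphi_inv C o o') (idm _)) (qphi_inv C (qtens o o') o'')).
Proof.
  apply (inverse_comp HC); [apply (inverse_tensm HM); [apply qphi_iso | apply (inverse_id HC)]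
                           | apply qphi_iso].
Qed.

Lemma qPsi_nat (a b a' b' a'' b'' : qob C) f f' f'' :
  comp (qtensm C (qtens a a') (qtens b b') a'' b'' (qtensm C a b a' b' f f') f'') (qPsi a a' a'')
  = comp (qPsi b b' b'') (tensm (tensm f f') f'').
Proof.
  unfold qPsi.
  rewrite (comp_assoc HC), qtensm_phi. reassoc HC. f_equal.
  rewrite <- (tensm_comp HM), qtensm_phi, (comp_idr HC), (tensm_comp_l HM). reflexivity.
Qed.

Lemma qPhi_nat (a b a' b' a'' b'' : qob C) f f' f'' :
  comp (qtensm C a b (qtens a' a'') (qtens b' b'') f (qtensm C a' b' a'' b'' f' f'')) (qPhi a a' a'')
  = comp (qPhi b b' b'') (tensm f (tensm f' f'')).
Proof.
  unfold qPhi.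
  rewrite (comp_assoc HC), qtensm_phi. reassoc HC. f_equal.
  rewrite <- (tensm_comp HM), qtensm_phi, (comp_idr HC), (tensm_comp_r HM). reflexivity.
Qed.

(* Naturality of the associator of C_q, transported from C along Psi, Phi. *)
Lemma qassoc_nat (a b a' b' a'' b'' : qob C) f f' f'' :
  comp (qassoc C b b' b'') (qtensm C (qtens a a') (qtens b b') a'' b'' (qtensm C a b a' b' f f') f'')
  = comp (qtensm C a b (qtens a' a'') (qtens b' b'') f (qtensm C a' b' a'' b'' f' f''))
         (qassoc C a a' a'').
Proof.
  apply (iso_epi HC _ _ _ _ (qPsi_iso a a' a'')).
  reassoc HC. rewrite qPsi_nat, (comp_assoc HC), qassoc_char.
  reassoc HC. rewrite (assoc_nat HM), (comp_assoc HC), <- qPhi_nat.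
  reassoc HC. rewrite <- qassoc_char. reflexivity.
Qed.

Theorem qmon_moncat : is_moncat (qmon C).
Proof.
  unfold is_moncat. simpl.
  split; [|split; [|split; [|split; [|split; [|split; [|split; [|split; [|split; [|split]]]]]]]]].
  - destruct HC as (idl & idr & assoc). split; [|split]; intros; simpl; auto.
  - intros; apply qtensm_id.
  - intros; apply qtensm_comp.
  - intros; apply qassoc_nat.
  - intros [x|] [y|] [z|]; simpl; first [apply (assoc_iso HM) | apply (inverse_id HC)].
  - intros. rewrite (comp_idl HC), (comp_idr HC). apply qtensm_unit_l.
  - intros; apply (inverse_id HC).
  - intros; apply qtensm_unit_r.
  - intros [x|]; simpl; apply (inverse_id HC).
  - intros [w|] [x|] [y|] [z|]; simpl;
      rewrite ?qtensm_nonempty, ?qtensm_unit_l, ?qtensm_unit_r_nonempty, ?(tensm_id HM),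
              ?(comp_idl HC), ?(comp_idr HC); try reflexivity.
    apply (pentagon HM).
  - intros [x|] y; simpl; rewrite qtensm_id; apply (comp_idl HC).
Qed.

End NonStrictification.

(* C_q is never strict: the associator on three one-letter words
   ((1),.)*((1),.)*((1),.) relates two distinct bracketings. *)
Lemma qmon_nonstrict (C : MonData) : is_nonstrict (qmon C).
Proof.
  intros [Hassoc _].
  destruct (Hassoc (Some (Leaf (munit C))) (Some (Leaf (munit C))) (Some (Leaf (munit C))))
    as [e _].
  discriminate e.
Qed.

Section Comparison.
Context {C D : MonData} (HD : is_moncat D) {F : MonFun C D} (HF : structure_invertible F).

Lemma qbeta_iso (o : qob C) : inverse_pair (qbeta F o) (qbeta_inv F o).
Proof.
  destruct o as [t|]; simpl; [|apply HF].
  induction t as [x|l IHl r IHr]; simpl.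
  - apply (inverse_id (moncat_cat HD)).
  - apply (inverse_comp (moncat_cat HD)); [apply (inverse_tensm HD); assumption | apply HF].
Qed.

Lemma qbeta_inv_unique (o : qob C) h : inverse_pair (qbeta F o) h -> qbeta_inv F o = h.
Proof. apply (inverse_unique (moncat_cat HD)), qbeta_iso. Qed.

End Comparison.

(* F_q f is f conjugated by beta, so
   functoriality is that of F; compatibility with the tensor comes from the
   compatibility of beta with phi (lemma [qbeta_tens], which uses the unit
   axioms of F when a factor is empty), and the associativity axiom reduces,
   for three nonempty factors, to that of F. *)
Section FunctorQ.
Context {C D : MonData} (HC : is_moncat C) (HD : is_moncat D) {F : MonFun C D} (HF : is_strong F).

Let HDc : is_cat D := moncat_cat HD.
Let Hbeta : forall o : qob C, inverse_pair (qbeta F o) (qbeta_inv F o) :=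
  qbeta_iso HD (strong_structure_invertible HF).

Lemma qfmap_id (o : qob C) : qfmap F o o (idm (Par C o)) = idm (Par D (qfob F o)).
Proof. unfold qfmap. rewrite (fmap_id HF), (comp_idl HDc). apply Hbeta. Qed.

Lemma qfmap_comp (a b c : qob C) f g :
  qfmap F a c (comp g f) = comp (qfmap F b c g) (qfmap F a b f).
Proof.
  unfold qfmap. rewrite (fmap_comp HF). reassoc HDc.
  rewrite (cancel_r HDc _ _ _ (Hbeta b)). reflexivity.
Qed.

(* beta turns the canonical isomorphisms phi of D_q into those of C_q. *)
Lemma qbeta_tens (o o' : qob C) :
  comp (qbeta F (qtens o o')) (comp (qfgam F o o') (qphi D (qfob F o) (qfob F o')))
  = comp (fmap F (qphi C o o')) (comp (fgam F (Par C o) (Par C o')) (tensm (qbeta F o) (qbeta F o'))).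
Proof.
  destruct o as [a|], o' as [b|]; simpl; rewrite (comp_idl HDc).
  - rewrite (comp_idr HDc), (fmap_id HF), (comp_idl HDc). reflexivity.
  - rewrite (tensm_split_rl HD), !(comp_assoc HDc), <- (comp_assoc HDc (tensm (idm _) (funit F))),
            (fgam_runit HF), (runit_nat HD).
    reflexivity.
  - rewrite (tensm_split_lr HD), !(comp_assoc HDc), <- (comp_assoc HDc (tensm (funit F) (idm _))),
            (fgam_lunit HF), (lunit_nat HD).
    reflexivity.
  - rewrite (tensm_split_lr HD), !(comp_assoc HDc), <- (comp_assoc HDc (tensm (funit F) (idm _))),
            (fgam_lunit HF), (lunit_nat HD).
    reflexivity.
Qed.

(* F_q commutes with the tensor of morphisms (its structure maps being
   identities), obtained by conjugating the naturality of gamma by beta and phi. *)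
Lemma qfmap_tens (a a' b b' : qob C) f f' :
  comp (qfgam F b b')
       (qtensm D (qfob F a) (qfob F b) (qfob F a') (qfob F b') (qfmap F a b f) (qfmap F a' b' f'))
  = comp (qfmap F (qtens a a') (qtens b b') (qtensm C a b a' b' f f')) (qfgam F a a').
Proof.
  apply (iso_mono HDc (qbeta F (qtens b b')) _ _ _ (Hbeta _)).
  apply (iso_epi HDc (qphi D (qfob F a) (qfob F a')) _ _ _ (qphi_iso HD _ _)).
  reassoc HDc. rewrite (qtensm_phi HD).
  rewrite (comp_assoc HDc _ (qphi D _ _) (qfgam F _ _)),
          (comp_assoc HDc _ (comp (qfgam F _ _) (qphi D _ _)) (qbeta F _)), qbeta_tens.
  reassoc HDc. rewrite <- (tensm_comp HD).
  unfold qfmap at 1 2. rewrite (cancel_r HDc _ _ _ (Hbeta b)), (cancel_r HDc _ _ _ (Hbeta b')).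
  rewrite (tensm_comp HD), (comp_assoc HDc _ (tensm (fmap F f) (fmap F f'))), (fgam_nat HF).
  unfold qfmap. reassoc HDc. rewrite (cancel_r HDc _ _ _ (Hbeta _)).
  reassoc HDc. rewrite qbeta_tens.
  reassoc HDc. rewrite (comp_assoc HDc _ (fmap F (qphi C _ _))), <- (fmap_comp HF),
                       (qtensm_phi HC), (fmap_comp HF).
  reassoc HDc. reflexivity.
Qed.

Lemma qfmap_assoc (x y z : ntree C) :
  qfmap F (Some (Node (Node x y) z)) (Some (Node x (Node y z)))
        (massoc (parN C x) (parN C y) (parN C z))
  = massoc (parN D (ntree_map (fob F) x)) (parN D (ntree_map (fob F) y))
           (parN D (ntree_map (fob F) z)).
Proof.
  unfold qfmap.
  apply (iso_mono HDc _ _ _ _ (Hbeta (Some (Node x (Node y z))))).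
  rewrite (cancel_r HDc _ _ _ (Hbeta _)). simpl.
  rewrite (tensm_comp_l HD), (tensm_comp_r HD). reassoc HDc.
  rewrite !(comp_assoc HDc (tensm (tensm (betaN F x) (betaN F y)) (betaN F z))), (fgam_assoc HF).
  reassoc HDc. rewrite (assoc_nat HD). reflexivity.
Qed.

(* [qfmap_id] at a goal that matches it only up to conversion. *)
Local Ltac qfmap_id_at := match goal with |- qfmap _ ?o _ _ = _ => exact (qfmap_id o) end.

Lemma qF_strong : is_strong (qF F).
Proof.
  unfold is_strong. simpl.
  split; [|split; [|split; [|split; [|split; [|split; [|split]]]]]].
  - intros; apply qfmap_id.
  - intros; apply qfmap_comp.
  - intros; apply qfmap_tens.
  - intros [x|] [y|]; simpl; apply (inverse_id HDc).
  - apply (inverse_id HDc).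
  - intros [x|] [y|] [z|]; simpl; rewrite ?(qtensm_id HD), ?(comp_idl HDc), ?(comp_idr HDc);
      [apply qfmap_assoc | qfmap_id_at ..].
  - intros x. rewrite qfmap_id, (qtensm_unit_l HD), !(comp_idl HDc). reflexivity.
  - intros [x|]; simpl; rewrite ?(qtensm_id HD), ?(comp_idl HDc), ?(comp_idr HDc); qfmap_id_at.
Qed.

Theorem qF_strict : is_strict (qF F).
Proof.
  split; [apply qF_strong | split].
  - intros [x|] [y|]; exists eq_refl; reflexivity.
  - exists eq_refl; reflexivity.
Qed.

End FunctorQ.

(* By induction on the
   bracketing, beta_G . alpha_q = alpha_Par . beta_F (the monoidality of
   alpha is exactly the inductive step), so alpha_q is alpha conjugated by
   the comparison isomorphisms; naturality follows from that of alpha, and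
   the monoidal axioms hold on the nose since all structure maps of F_q,
   G_q are identities. *)
Section TransformationQ.
Context {C D : MonData} (HD : is_moncat D) {F G : MonFun C D} {a : NatData F G} (Ha : is_monnat a).

Let HDc : is_cat D := moncat_cat HD.

Lemma qbeta_qN (o : qob C) : comp (qbeta G o) (qN a o) = comp (a (Par C o)) (qbeta F o).
Proof.
  destruct Ha as (_ & Htens & Hunit).
  destruct o as [t|]; simpl.
  - induction t as [x|l IHl r IHr]; simpl.
    + rewrite (comp_idl HDc), (comp_idr HDc). reflexivity.
    + rewrite <- (comp_assoc HDc), <- (tensm_comp HD), IHl, IHr, (tensm_comp HD),
              (comp_assoc HDc), <- Htens, (comp_assoc HDc).
      reflexivity.
  - rewrite (comp_idr HDc). symmetry. exact Hunit.
Qed.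

Lemma qN_conj (HG : structure_invertible G) (o : qob C) :
  qN a o = comp (qbeta_inv G o) (comp (a (Par C o)) (qbeta F o)).
Proof.
  apply (iso_mono HDc _ _ _ _ (qbeta_iso HD HG o)).
  rewrite (cancel_r HDc _ _ _ (qbeta_iso HD HG o)). apply qbeta_qN.
Qed.

Theorem qN_monnat (HF : is_strong F) (HG : is_strong G) : is_monnat (qN a).
Proof.
  pose proof (strong_structure_invertible HG) as HGi.
  unfold is_monnat. simpl. split; [|split].
  - intros x y f. rewrite !(qN_conj HGi). unfold qfmap. reassoc HDc.
    rewrite (cancel_r HDc _ _ _ (qbeta_iso HD (strong_structure_invertible HF) y)),
            (cancel_r HDc _ _ _ (qbeta_iso HD HGi x)),
            (comp_assoc HDc _ (fmap F f)), (proj1 Ha).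
    reassoc HDc. reflexivity.
  - intros [x|] [y|]; simpl;
      rewrite ?(qtensm_nonempty HD), ?(qtensm_unit_l HD), ?(qtensm_unit_r_nonempty HD),
              ?(comp_idl HDc), ?(comp_idr HDc);
      reflexivity.
  - apply (comp_idl HDc).
Qed.

End TransformationQ.

Lemma MonFun_ext {C D : MonData} (HD : is_moncat D) (F G : MonFun C D)
  (eob : forall x, fob F x = fob G x)
  (Hmap : forall a b (f : hom C a b),
      comp (eq_hom (eob b)) (fmap F f) = comp (fmap G f) (eq_hom (eob a)))
  (Hgam : forall x y,
      comp (eq_hom (eob (tens x y))) (fgam F x y)
      = comp (fgam G x y) (tensm (eq_hom (eob x)) (eq_hom (eob y))))
  (Hgam_inv : forall x y,
      comp (tensm (eq_hom (eob x)) (eq_hom (eob y))) (fgam_inv F x y)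
      = comp (fgam_inv G x y) (eq_hom (eob (tens x y))))
  (Hunit : comp (eq_hom (eob (munit C))) (funit F) = funit G)
  (Hunit_inv : funit_inv F = comp (funit_inv G) (eq_hom (eob (munit C)))) :
  F = G.
Proof.
  pose proof (moncat_cat HD) as HDc.
  destruct F as [f1 m1 g1 gi1 u1 ui1], G as [f2 m2 g2 gi2 u2 ui2]; simpl in *.
  assert (e : f1 = f2) by (apply functional_extensionality; exact eob). subst f2.
  assert (E : eob = fun x => eq_refl)
    by (apply functional_extensionality_dep; intro; apply proof_irrelevance).
  subst eob. simpl in *.
  rewrite (comp_idl HDc) in Hunit. rewrite (comp_idr HDc) in Hunit_inv. subst u2 ui1.
  assert (m1 = m2).
  { do 3 (apply functional_extensionality_dep; intro).
    rewrite <- (comp_idl HDc (m1 _ _ _)), Hmap. apply (comp_idr HDc). }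
  assert (g1 = g2).
  { do 2 (apply functional_extensionality_dep; intro).
    rewrite <- (comp_idl HDc (g1 _ _)), Hgam, (tensm_id HD). apply (comp_idr HDc). }
  assert (gi1 = gi2).
  { do 2 (apply functional_extensionality_dep; intro).
    rewrite <- (comp_idl HDc (gi1 _ _)), <- (tensm_id HD), Hgam_inv. apply (comp_idr HDc). }
  subst. reflexivity.
Qed.

Lemma eq_hom_qcat {C : MonData} {o o' : qob C} (e : o = o') :
  @eq_hom (qcat C) o o' e = @eq_hom C (Par C o) (Par C o') (f_equal (Par C) e).
Proof. destruct e. reflexivity. Qed.

Lemma qtensm_eq_hom {M : MonData} (HM : is_moncat M) {a b c d : qob M} (e1 : a = b) (e2 : c = d) :
  qtensm M a b c d (@eq_hom (qcat M) _ _ e1) (@eq_hom (qcat M) _ _ e2)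
  = @eq_hom (qcat M) _ _ (f_equal2 qtens e1 e2).
Proof. destruct e1, e2. simpl. rewrite (eq_hom_refl (C := qcat M)). apply (qtensm_id HM). Qed.

Lemma qfmap_eq_hom {C D : MonData} (HD : is_moncat D) {F : MonFun C D} (HF : is_strong F)
  {a b : qob C} (e : a = b) :
  qfmap F a b (@eq_hom (qcat C) _ _ e) = @eq_hom (qcat D) _ _ (f_equal (qfob F) e).
Proof. destruct e. apply (qfmap_id HD HF). Qed.

Lemma qfgam_eq_hom {C D : MonData} (F : MonFun C D) (x y : qob C) :
  exists e, qfgam F x y = @eq_hom (qcat D) _ _ e.
Proof. destruct x as [x|], y as [y|]; exists eq_refl; reflexivity. Qed.

Lemma qfgam_inv_eq_hom {C D : MonData} (F : MonFun C D) (x y : qob C) :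
  exists e, qfgam_inv F x y = @eq_hom (qcat D) _ _ e.
Proof. destruct x as [x|], y as [y|]; exists eq_refl; reflexivity. Qed.

Ltac transport_solve HC :=
  repeat rewrite eq_hom_qcat;
  repeat (rewrite (eq_hom_comp_k HC) || rewrite (eq_hom_comp HC));
  rewrite ?eq_hom_refl, ?(comp_idl HC), ?(comp_idr HC);
  first [reflexivity | apply eq_hom_irrel | (f_equal; apply eq_hom_irrel)].

(* q preserves identity 1-cells: for the identity functor beta is a
   transport along ntree_map id t = t. *)
Section IdentityFunctor.
Context {C : MonData} (HC : is_moncat C).

Let HCc : is_cat C := moncat_cat HC.

Lemma ntree_map_id {A : Type} (t : ntree A) : ntree_map (fun x => x) t = t.
Proof. induction t; simpl; congruence. Qed.

Lemma qfob_id (o : qob C) : qfob (idMF C) o = o.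
Proof. destruct o; simpl; [rewrite ntree_map_id|]; reflexivity. Qed.

Lemma idMF_invertible : structure_invertible (idMF C).
Proof. split; [intros x y|]; apply (inverse_id HCc). Qed.

Lemma betaN_id (t : ntree C) (E : parN C (ntree_map (fob (idMF C)) t) = parN C t) :
  betaN (idMF C) t = eq_hom E.
Proof.
  revert E; induction t as [x|l IHl r IHr]; intros E; simpl.
  - rewrite eq_hom_refl. reflexivity.
  - rewrite (IHl (f_equal (parN C) (ntree_map_id l))), (IHr (f_equal (parN C) (ntree_map_id r))),
            (tensm_eq_hom HC), (comp_idl HCc).
    apply eq_hom_irrel.
Qed.

Lemma qbeta_id (o : qob C) : qbeta (idMF C) o = eq_hom (f_equal (Par C) (qfob_id o)).
Proof.
  destruct o as [t|]; simpl; [apply betaN_id|].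
  rewrite eq_hom_refl. reflexivity.
Qed.

Lemma qbeta_inv_id (o : qob C) :
  qbeta_inv (idMF C) o = eq_hom (eq_sym (f_equal (Par C) (qfob_id o))).
Proof.
  apply (qbeta_inv_unique HC idMF_invertible). rewrite qbeta_id. apply (eq_hom_inverse HCc).
Qed.

Theorem qF_id : qF (idMF C) = idMF (qmon C).
Proof.
  apply (MonFun_ext (qmon_moncat HC) (qF (idMF C)) (idMF (qmon C)) qfob_id); simpl.
  - intros a b f. unfold qfmap. rewrite qbeta_id, qbeta_inv_id. simpl. transport_solve HCc.
  - intros x y. destruct (qfgam_eq_hom (idMF C) x y) as [e ->].
    rewrite (qtensm_eq_hom HC). transport_solve HCc.
  - intros x y. destruct (qfgam_inv_eq_hom (idMF C) x y) as [e ->].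
    rewrite (qtensm_eq_hom HC). transport_solve HCc.
  - transport_solve HCc.
  - transport_solve HCc.
Qed.

End IdentityFunctor.

(* q preserves composition of 1-cells: beta for G . F is, up to the
   transport along ntree_map (G . F) = ntree_map G . ntree_map F, the
   composite G(beta_F) . beta_G. *)
Section CompositeFunctor.
Context {C D E : MonData} (HD : is_moncat D) (HE : is_moncat E)
        {F : MonFun C D} {G : MonFun D E} (HF : is_strong F) (HG : is_strong G).

Let HEc : is_cat E := moncat_cat HE.

Lemma ntree_map_comp {A B A' : Type} (f : A -> B) (g : B -> A') (t : ntree A) :
  ntree_map (fun x => g (f x)) t = ntree_map g (ntree_map f t).
Proof. induction t; simpl; congruence. Qed.

Lemma qfob_comp (o : qob C) : qfob (compMF G F) o = qfob G (qfob F o).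
Proof. destruct o; simpl; [rewrite ntree_map_comp|]; reflexivity. Qed.

Lemma compMF_invertible : structure_invertible (compMF G F).
Proof.
  destruct (strong_structure_invertible HF) as [HFg HFu].
  destruct (strong_structure_invertible HG) as [HGg HGu].
  split; [intros x y|]; simpl; apply (inverse_comp HEc); auto; apply (fmap_inverse HG); auto.
Qed.

Lemma betaN_comp (t : ntree C)
  (Eq : parN E (ntree_map (fob (compMF G F)) t) = parN E (ntree_map (fob G) (ntree_map (fob F) t))) :
  betaN (compMF G F) t = comp (fmap G (betaN F t)) (comp (betaN G (ntree_map (fob F) t)) (eq_hom Eq)).
Proof.
  revert Eq; induction t as [x|l IHl r IHr]; intros Eq; simpl.
  - rewrite eq_hom_refl, (fmap_id HG), !(comp_idl HEc). reflexivity.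
  - rewrite (IHl (f_equal (parN E) (ntree_map_comp (fob F) (fob G) l))),
            (IHr (f_equal (parN E) (ntree_map_comp (fob F) (fob G) r))).
    rewrite !(tensm_comp HE), (tensm_eq_hom HE), (fmap_comp HG). reassoc HEc.
    rewrite (comp_assoc HEc _ (fgam G _ _) (fmap G (tensm _ _))), <- (fgam_nat HG). reassoc HEc.
    do 4 f_equal. apply eq_hom_irrel.
Qed.

Lemma qbeta_comp (o : qob C) (Eq : Par E (qfob (compMF G F) o) = Par E (qfob G (qfob F o))) :
  qbeta (compMF G F) o = comp (fmap G (qbeta F o)) (comp (qbeta G (qfob F o)) (eq_hom Eq)).
Proof.
  destruct o as [t|]; simpl; [apply betaN_comp|].
  rewrite eq_hom_refl, (comp_idr HEc). reflexivity.
Qed.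

Lemma qbeta_inv_comp (o : qob C) (Eq : Par E (qfob (compMF G F) o) = Par E (qfob G (qfob F o))) :
  qbeta_inv (compMF G F) o
  = comp (eq_hom (eq_sym Eq)) (comp (qbeta_inv G (qfob F o)) (fmap G (qbeta_inv F o))).
Proof.
  apply (qbeta_inv_unique HE compMF_invertible).
  rewrite (qbeta_comp o Eq), (comp_assoc HEc).
  apply (inverse_comp HEc); [apply (eq_hom_inverse HEc)|].
  apply (inverse_comp HEc); [apply (qbeta_iso HE (strong_structure_invertible HG))|].
  apply (fmap_inverse HG), (qbeta_iso HD (strong_structure_invertible HF)).
Qed.

Theorem qF_comp : qF (compMF G F) = compMF (qF G) (qF F).
Proof.
  apply (MonFun_ext (qmon_moncat HE) (qF (compMF G F)) (compMF (qF G) (qF F)) qfob_comp); simpl.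
  - intros a b f. unfold qfmap.
    rewrite (qbeta_comp a (f_equal (Par E) (qfob_comp a))),
            (qbeta_inv_comp b (f_equal (Par E) (qfob_comp b))).
    rewrite !eq_hom_qcat, !(fmap_comp HG). reassoc HEc.
    rewrite (eq_hom_comp_k HEc), eq_hom_refl, (comp_idl HEc). reflexivity.
  - intros x y. destruct (qfgam_eq_hom (compMF G F) x y) as [e1 ->].
    destruct (qfgam_eq_hom F x y) as [e2 ->]. destruct (qfgam_eq_hom G (qfob F x) (qfob F y)) as [e3 ->].
    rewrite (qfmap_eq_hom HE HG), (qtensm_eq_hom HE). transport_solve HEc.
  - intros x y. destruct (qfgam_inv_eq_hom (compMF G F) x y) as [e1 ->].
    destruct (qfgam_inv_eq_hom F x y) as [e2 ->].
    destruct (qfgam_inv_eq_hom G (qfob F x) (qfob F y)) as [e3 ->].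
    rewrite (qfmap_eq_hom HE HG), (qtensm_eq_hom HE). transport_solve HEc.
  - pose proof (qfmap_id HE HG None) as Gq_unit; simpl in Gq_unit.
    rewrite Gq_unit. transport_solve HEc.
  - pose proof (qfmap_id HE HG None) as Gq_unit; simpl in Gq_unit.
    rewrite Gq_unit. transport_solve HEc.
Qed.

End CompositeFunctor.

(* q preserves identity and vertical composition of 2-cells, since the
   components of alpha_q are tensor products of components of alpha and the
   tensor is a bifunctor. *)
Lemma qN_id {C D : MonData} (HD : is_moncat D) (F : MonFun C D) (o : qob C) :
  qN (idN F) o = idN (qF F) o.
Proof.
  destruct o as [t|]; simpl; [|reflexivity].
  unfold idN; simpl. induction t as [x|l IHl r IHr]; simpl; [reflexivity|].
  rewrite IHl, IHr. apply (tensm_id HD).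
Qed.

Lemma qN_vcomp {C D : MonData} (HD : is_moncat D) {F G H : MonFun C D}
  (a : NatData F G) (b : NatData G H) (o : qob C) :
  qN (vcomp b a) o = vcomp (qN b) (qN a) o.
Proof.
  unfold vcomp. destruct o as [t|]; simpl; [|symmetry; apply (comp_idl (moncat_cat HD))].
  induction t as [x|l IHl r IHr]; simpl; [reflexivity|].
  rewrite IHl, IHr. apply (tensm_comp HD).
Qed.

Lemma hcomp_monnat {C D E : MonData} (HE : is_moncat E)
  {F F' : MonFun C D} {G G' : MonFun D E} (HG : is_strong G)
  {a : NatData F F'} {b : NatData G G'} (Ha : is_monnat a) (Hb : is_monnat b) :
  is_monnat (hcomp b a).
Proof.
  pose proof (moncat_cat HE) as HEc.
  destruct Ha as (a_nat & a_tens & a_unit), Hb as (b_nat & b_tens & b_unit).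
  unfold is_monnat, hcomp; simpl. split; [|split].
  - intros x y f. reassoc HEc.
    rewrite <- (fmap_comp HG), a_nat, (fmap_comp HG), (comp_assoc HEc), b_nat.
    reassoc HEc. reflexivity.
  - intros x y. reassoc HEc.
    rewrite (comp_assoc HEc _ (fmap G (fgam F x y))), <- (fmap_comp HG), a_tens, (fmap_comp HG).
    reassoc HEc. rewrite <- (fgam_nat HG).
    reassoc HEc. rewrite (comp_assoc HEc _ (fmap G (fgam F' x y))), b_nat.
    reassoc HEc. rewrite (comp_assoc HEc _ (fgam G _ _)), b_tens.
    reassoc HEc. rewrite <- (tensm_comp HE). reflexivity.
  - reassoc HEc.
    rewrite (comp_assoc HEc _ (fmap G (funit F))), <- (fmap_comp HG), a_unit.
    rewrite (comp_assoc HEc (funit G)), b_nat, <- (comp_assoc HEc), b_unit. reflexivity.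
Qed.

Lemma castN_eq {C D : MonData} (HD : is_cat D) {F G F' G' : MonFun C D}
  (e1 : F = F') (e2 : G = G') (a : NatData F G) (o : C) :
  castN e1 e2 a o
  = comp (eq_hom (f_equal (fun H => fob H o) e2))
         (comp (a o) (eq_hom (eq_sym (f_equal (fun H => fob H o) e1)))).
Proof. destruct e1, e2. simpl. rewrite (comp_idl HD), (comp_idr HD). reflexivity. Qed.

(* q preserves horizontal composition: writing each alpha_q as alpha
   conjugated by beta ([qN_conj]) and beta of a composite as a composite of
   betas ([qbeta_comp], [qbeta_inv_comp]), both sides become
   beta^-1 . b . G(a) . beta up to transports. *)
Theorem qN_hcomp {C D E : MonData} (HD : is_moncat D) (HE : is_moncat E)
  {F F' : MonFun C D} {G G' : MonFun D E} {a : NatData F F'} {b : NatData G G'}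
  (HF : is_strong F) (HF' : is_strong F') (HG : is_strong G) (HG' : is_strong G')
  (Ha : is_monnat a) (Hb : is_monnat b)
  (e1 : qF (compMF G F) = compMF (qF G) (qF F))
  (e2 : qF (compMF G' F') = compMF (qF G') (qF F')) (o : qob C) :
  castN e1 e2 (qN (hcomp b a)) o = hcomp (qN b) (qN a) o.
Proof.
  pose proof (moncat_cat HE) as HEc.
  rewrite (castN_eq (moncat_cat (qmon_moncat HE))). simpl. rewrite !eq_hom_qcat.
  unfold hcomp at 2. simpl.
  rewrite (qN_conj HD Ha (strong_structure_invertible HF') o),
          (qN_conj HE Hb (strong_structure_invertible HG') (qfob F' o)),
          (qN_conj HE (hcomp_monnat HE HG Ha Hb) (compMF_invertible HE HF' HG') o),
          (qbeta_comp HE HG o (f_equal (Par E) (qfob_comp (F := F) (G := G) o))),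
          (qbeta_inv_comp HD HE HF' HG' o (f_equal (Par E) (qfob_comp (F := F') (G := G') o))).
  unfold qfmap, hcomp. rewrite !(fmap_comp HG). reassoc HEc.
  rewrite (cancel_r HEc _ _ _ (qbeta_iso HE (strong_structure_invertible HG) (qfob F' o))).
  rewrite (comp_assoc HEc _ (fmap G (qbeta_inv F' o)) (b _)), (proj1 Hb). reassoc HEc.
  rewrite (eq_hom_comp_k HEc), eq_hom_refl, (comp_idl HEc).
  do 6 f_equal. rewrite (eq_hom_comp HEc), eq_hom_refl, (comp_idr HEc). reflexivity.
Qed.

Theorem mainTheorem12 :
  (* C |-> C_q : well defined, lands in non-strict monoidal categories *)
  (forall C : MonData, is_moncat C -> is_moncat (qmon C) /\ is_nonstrict (qmon C)) /\
  (* F |-> F_q : well defined, strict monoidal *)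
  (forall (C D : MonData) (F : MonFun C D),
      is_moncat C -> is_moncat D -> is_strong F -> is_strict (qF F)) /\
  (* alpha |-> alpha_q : well defined, monoidal natural transformation *)
  (forall (C D : MonData) (F G : MonFun C D) (a : NatData F G),
      is_moncat C -> is_moncat D -> is_strong F -> is_strong G -> is_monnat a ->
      is_monnat (qN a)) /\
  (* 2-functoriality: identity 1-cells *)
  (forall C : MonData, is_moncat C -> qF (idMF C) = idMF (qmon C)) /\
  (* composition of 1-cells *)
  (forall (C D E : MonData) (F : MonFun C D) (G : MonFun D E),
      is_moncat C -> is_moncat D -> is_moncat E -> is_strong F -> is_strong G ->
      qF (compMF G F) = compMF (qF G) (qF F)) /\
  (* identity 2-cells *)
  (forall (C D : MonData) (F : MonFun C D),
      is_moncat C -> is_moncat D -> is_strong F ->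
      forall o, qN (idN F) o = idN (qF F) o) /\
  (* vertical composition of 2-cells *)
  (forall (C D : MonData) (F G H : MonFun C D) (a : NatData F G) (b : NatData G H),
      is_moncat C -> is_moncat D -> is_strong F -> is_strong G -> is_strong H ->
      is_monnat a -> is_monnat b ->
      forall o, qN (vcomp b a) o = vcomp (qN b) (qN a) o) /\
  (* horizontal composition of 2-cells (transported along the 1-cell equalities) *)
  (forall (C D E : MonData) (F F' : MonFun C D) (G G' : MonFun D E)
          (a : NatData F F') (b : NatData G G'),
      is_moncat C -> is_moncat D -> is_moncat E ->
      is_strong F -> is_strong F' -> is_strong G -> is_strong G' ->
      is_monnat a -> is_monnat b ->
      forall (e1 : qF (compMF G F) = compMF (qF G) (qF F))
             (e2 : qF (compMF G' F') = compMF (qF G') (qF F')) o,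
      castN e1 e2 (qN (hcomp b a)) o = hcomp (qN b) (qN a) o).
Proof.
  split; [|split; [|split; [|split; [|split; [|split; [|split]]]]]].
  - intros C HC. exact (conj (qmon_moncat HC) (qmon_nonstrict C)).
  - intros C D F HC HD HF. exact (qF_strict HC HD HF).
  - intros C D F G a HC HD HF HG Ha. exact (qN_monnat HD Ha HF HG).
  - intros C HC. exact (qF_id HC).
  - intros C D E F G HC HD HE HF HG. exact (qF_comp HD HE HF HG).
  - intros C D F HC HD HF o. exact (qN_id HD F o).
  - intros C D F G H a b HC HD HF HG HH Ha Hb o. exact (qN_vcomp HD a b o).
  - intros C D E F F' G G' a b HC HD HE HF HF' HG HG' Ha Hb e1 e2 o.
    exact (qN_hcomp HD HE HF HF' HG HG' Ha Hb e1 e2 o).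
Qed.
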